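(* For every nonnegative integer $n$, $$\sum_{k=0}^{\infty}(-1)^k(4k+1)\,\frac{(-2n)_k\,(-3n-\tfrac14)_k\,(\tfrac12)_k}{k!\,(2n+\tfrac32)_k\,(3n+\tfrac74)_k}=\left(\frac{2^2 3^3}{5^5}\right)^n\frac{(\tfrac{11}{12})_n(\tfrac{7}{12})_n(\tfrac54)_n^2}{(\tfrac{11}{20})_n(\tfrac{19}{20})_n(\tfrac{23}{20})_n(\tfrac{7}{20})_n}.$$ (The sum is finite, since $(-2n)_k=0$ for $k>2n$.)
   Context: $(a)_j=\Gamma(a+j)/\Gamma(a)=a(a+1)\cdots(a+j-1)$ denotes the rising factorial (Pochhammer symbol), with $(a)_0=1$. *)

From HB Require Import structures.
From mathcomp Require Import all_boot all_order all_algebra.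
Set Implicit Arguments. Unset Strict Implicit. Unset Printing Implicit Defensive.
Import Order.TTheory GRing.Theory Num.Theory.
Local Open Scope ring_scope.

Definition poch (R : pzRingType) (a : R) (j : nat) : R :=
  \prod_(i < j) (a + i%:R).

(* The sum is the instance m = 2n, d = 3n + 7/4 of the well-poised
   evaluation (Dougall type), valid for every m : nat and d > 0,

     S(m) := sum_k (-1)^k (4k+1) (-m)_k (3/2-d)_k (1/2)_k
                   / (k! (m+3/2)_k (d)_k)  =  (3/2)_m / (d)_m.

   It is proved by induction on m with a Wilf-Zeilberger certificate: the
   normalized summands F(m,k) = term/value satisfy
   F(m+1,k) - F(m,k) = G(m,k+1) - G(m,k), a rational-function identity checked
   by 'field', so the difference S(m+1)/value(m+1) - S(m)/value(m) telescopes
   to a vanishing boundary term.  The right-hand side (3/2)_{2n}/(3n+7/4)_{2n}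
   is then put in closed form with the Gauss multiplication formula
   (a)_{kn} = k^{kn} prod_{i<k} ((a+i)/k)_n, applied to (3/2)_{2n}, (7/4)_{3n}
   and (7/4)_{5n} = (7/4)_{3n} (3n+7/4)_{2n}. *)

From HB Require Import structures.
From mathcomp Require Import all_boot all_order all_algebra.
From mathcomp Require Import ring lra.
Set Implicit Arguments. Unset Strict Implicit. Unset Printing Implicit Defensive.
Import Order.TTheory GRing.Theory Num.Theory.
Local Open Scope ring_scope.

Section Pochhammer.
Variable R : comPzRingType.
Implicit Types (a : R) (j m n : nat).

Lemma poch0 a : poch a 0 = 1.
Proof. by rewrite /poch big_ord0. Qed.

Lemma pochS a j : poch a j.+1 = poch a j * (a + j%:R).
Proof. by rewrite /poch big_ord_recr. Qed.

Lemma pochSl a j : poch a j.+1 = a * poch (a + 1) j.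
Proof.
rewrite /poch big_ord_recl addr0; congr (_ * _); apply: eq_bigr => i _.
by rewrite -addrA [1 + _]addrC natr1.
Qed.

Lemma poch_add a m n : poch a (m + n) = poch a m * poch (a + m%:R) n.
Proof.
rewrite /poch big_split_ord; congr (_ * _); apply: eq_bigr => i _.
by rewrite natrD addrA.
Qed.

(* (-m)_j vanishes once the factor -m + m = 0 occurs: this terminates the sums. *)
Lemma poch_neg_nat m j : (m < j)%N -> poch (- m%:R) j = 0 :> R.
Proof. by move=> lt_mj; rewrite /poch (bigD1 (Ordinal lt_mj)) //= addNr mul0r. Qed.

Lemma poch_neg_natS m j : poch (- m.+1%:R) j.+1 = - m.+1%:R * poch (- m%:R) j :> R.
Proof. by rewrite pochSl -natr1 opprD addrNK. Qed.

End Pochhammer.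

Lemma poch_shiftS (R : fieldType) (a : R) j :
  a != 0 -> poch (a + 1) j = poch a j.+1 / a.
Proof. by move=> a_neq0; rewrite pochSl mulrC mulKf. Qed.

Lemma poch_gt0 (R : numDomainType) (a : R) j : 0 < a -> 0 < poch a j.
Proof. by move=> a_gt0; apply: prodr_gt0 => i _; rewrite ltr_wpDr ?ler0n. Qed.

Lemma poch_neq0 (R : numDomainType) (a : R) j : 0 < a -> poch a j != 0.
Proof. by move=> a_gt0; rewrite lt0r_neq0 ?poch_gt0. Qed.

(* Gauss multiplication formula: (a)_{kn} = k^{kn} prod_{i<k} ((a+i)/k)_n.
   Both sides gain the factors a + kn + i (i < k) when n grows by one. *)
Lemma poch_mul_index (R : fieldType) (a : R) k n : k%:R != 0 :> R ->
  poch a (k * n) = k%:R ^+ (k * n) * \prod_(i < k) poch ((a + i%:R) / k%:R) n.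
Proof.
move=> k_neq0; elim: n => [|n IHn].
  by rewrite muln0 poch0 expr0 mul1r big1 // => i _; rewrite poch0.
under eq_bigr do rewrite pochS.
rewrite big_split /= mulnS addnC poch_add IHn exprD -!mulrA; congr (_ * _).
rewrite mulrCA; congr (_ * _).
rewrite -(card_ord k) -prodr_const card_ord -big_split /=; apply: eq_bigr => i _.
by rewrite mulrDr mulrCA mulfV // mulr1 natrM addrAC.
Qed.

Section TerminatingSum.
Variables (R : realFieldType) (d : R).
Hypothesis d_gt0 : 0 < d.

Definition term m k : R :=
  (-1) ^+ k * (4 * k%:R + 1) * (poch (- m%:R) k * poch (3/2 - d) k * poch (1/2) k)
  / (k`!%:R * poch (m%:R + 3/2) k * poch d k).

Definition value m : R := poch (3/2) m / poch d m.

(* The WZ certificate G(m,k) for the normalized summand term m k / value m. *)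
Definition cert m k : R :=
  2 * k%:R * (-1) ^+ k * poch (- m%:R) k.-1 * poch (3/2 - d) k * (k%:R + d - 1)
  * poch (1/2) k / (k`!%:R * poch (m%:R + 3/2) k * poch d k * value m).

Lemma value_gt0 m : 0 < value m.
Proof. by rewrite divr_gt0 ?poch_gt0 // divr_gt0 ?ltr0n. Qed.

Ltac positive_denominators :=
  rewrite !lt0r_neq0 //; try apply: poch_gt0; lra.

(* The WZ pair identity F(m+1,k) - F(m,k) = G(m,k+1) - G(m,k), once all
   Pochhammer symbols are expressed through (.)_k (or (.)_{k-1}). *)
Lemma cert_step m k :
  term m.+1 k / value m.+1 - term m k / value m = cert m k.+1 - cert m k.
Proof.
(* lra only uses hypotheses of the local context, hence the copy of d_gt0 *)
have m_ge0 := ler0n R m; have d_pos := d_gt0.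
have base_neq0 : m%:R + 3/2 != 0 :> R by rewrite lt0r_neq0 //; lra.
have shift : m.+1%:R + 3/2 = (m%:R + 3/2) + 1 :> R by rewrite -natr1 addrAC.
rewrite /term /cert /value shift poch_shiftS //.
case: k => [|j].
  by rewrite !pochS !poch0 /=; field; positive_denominators.
have j_ge0 := ler0n R j; have fact_pos : 0 < j`!%:R :> R by rewrite ltr0n fact_gt0.
rewrite poch_neg_natS !pochS !factS !natrM !exprS /=.
by field; positive_denominators.
Qed.

Lemma cert0 m : cert m 0 = 0.
Proof. by rewrite /cert mulr0 !mul0r. Qed.

(* The boundary term vanishes beyond the support, through (-m)_{k-1}. *)
Lemma cert_vanish m k : (m.+1 < k)%N -> cert m k = 0.
Proof.
by case: k => // k lt_mk; rewrite /cert poch_neg_nat ?(ltnW lt_mk) // !(mulr0, mul0r).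
Qed.

Lemma term0_vanish k : (0 < k)%N -> term 0 k = 0.
Proof. by move=> k_gt0; rewrite /term poch_neg_nat // !(mulr0, mul0r). Qed.

Lemma sum_term_normalized m M :
  \sum_(k < M) (term m.+1 k / value m.+1 - term m k / value m) = cert m M.
Proof.
elim: M => [|M IHM]; first by rewrite big_ord0 cert0.
by rewrite big_ord_recr /= IHM cert_step addrC subrK.
Qed.

Theorem sum_term m M : (m < M)%N -> \sum_(k < M) term m k = value m.
Proof.
elim: m M => [|m IHm] M lt_mM.
  case: M lt_mM => // M _; rewrite big_ord_recl big1 => [|i _]; last exact: term0_vanish.
  by rewrite /term /value !poch0 fact0 expr0 addr0 /=; field.
have := sum_term_normalized m M.
rewrite cert_vanish // sumrB -!mulr_suml IHm ?(ltnW lt_mM) // divff ?lt0r_neq0 ?value_gt0 //.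
move/eqP; rewrite subr_eq0 => /eqP sum_eq1.
by rewrite -[LHS](divfK (lt0r_neq0 (value_gt0 m.+1))) sum_eq1 mul1r.
Qed.

End TerminatingSum.

Section ClosedForm.
Variables (R : realFieldType) (n : nat).

Lemma poch_index2 : poch (3/2 : R) (2 * n) = 2 ^+ (2 * n) * (poch (3/4) n * poch (5/4) n).
Proof.
rewrite poch_mul_index ?pnatr_eq0 // !big_ord_recr big_ord0 /= mul1r.
by congr (_ * (poch _ n * poch _ n)); field.
Qed.

Lemma poch_index3 : poch (7/4 : R) (3 * n)
  = 3 ^+ (3 * n) * (poch (7/12) n * poch (11/12) n * poch (5/4) n).
Proof.
rewrite poch_mul_index ?pnatr_eq0 // !big_ord_recr big_ord0 /= mul1r.
by congr (_ * (poch _ n * poch _ n * poch _ n)); field.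
Qed.

Lemma poch_index5 : poch (7/4 : R) (5 * n) = 5 ^+ (5 * n) *
  (poch (7/20) n * poch (11/20) n * poch (3/4) n * poch (19/20) n * poch (23/20) n).
Proof.
rewrite poch_mul_index ?pnatr_eq0 // !big_ord_recr big_ord0 /= mul1r.
by congr (_ * (poch _ n * poch _ n * poch _ n * poch _ n * poch _ n)); field.
Qed.

Lemma closed_form :
  poch (3/2) (2 * n) / poch (3 * n%:R + 7/4) (2 * n)
  = ((2^+2 * 3^+3) / 5^+5) ^+ n *
    (poch (11/12) n * poch (7/12) n * poch (5/4) n ^+ 2)
    / (poch (11/20) n * poch (19/20) n * poch (23/20) n * poch (7/20) n) :> R.
Proof.
have split5 : poch (7/4 : R) (5 * n) = poch (7/4) (3 * n) * poch (3 * n%:R + 7/4) (2 * n).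
  by rewrite -[(5 * n)%N]/((3 + 2) * n)%N mulnDl poch_add natrM addrC.
have poch3_neq0 : poch (7/4 : R) (3 * n) != 0 by apply: poch_neq0; lra.
have const : ((2^+2 * 3^+3) / 5^+5) ^+ n = 2 ^+ (2 * n) * 3 ^+ (3 * n) / 5 ^+ (5 * n) :> R.
  by rewrite expr_div_n exprMn -!exprM.
rewrite -(mulKf poch3_neq0 (poch (3 * n%:R + 7/4) _)) -split5.
rewrite poch_index2 poch_index3 poch_index5 const.
by field; rewrite ?expf_neq0 ?pnatr_eq0 // !poch_neq0 //; lra.
Qed.

End ClosedForm.

Theorem theorem9 (n : nat) (N : nat) (hN : (2 * n <= N)%N) :
  \sum_(k < N.+1)
     (-1) ^+ k * (4 * k%:R + 1) *
     (poch (- (2 * n%:R)) k * poch (- (3 * n%:R) - 1/4) k * poch (1/2) k)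
     / (k`!%:R * poch (2 * n%:R + 3/2) k * poch (3 * n%:R + 7/4) k)
  = ((2^+2 * 3^+3) / 5^+5) ^+ n *
    (poch (11/12) n * poch (7/12) n * poch (5/4) n ^+ 2)
    / (poch (11/20) n * poch (19/20) n * poch (23/20) n * poch (7/20) n)
  :> rat.
Proof.
have n_ge0 := ler0n rat n.
have d_gt0 : 0 < 3 * n%:R + 7/4 :> rat by lra.
have c_eq : 3/2 - (3 * n%:R + 7/4) = - (3 * n%:R) - 1/4 :> rat by field.
rewrite -closed_form -[RHS]/(value _ (2 * n)) -(sum_term d_gt0 (M := N.+1)) ?ltnS //.
by apply: eq_bigr => k _; rewrite /term natrM c_eq.
Qed.
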